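(* Let $k\in\mathbb Z_{\ge1}$. With probability $1-\mathrm{negl}(n)$ over $G\sim G(n,1/2)$ the following holds: for every vertex set $S\subseteq[n]$ of size $k$ and every family $\mathcal B\subseteq\{B:\emptyset\ne B\subseteq S\}$ there exists a vertex $v\notin S$ such that for every $\emptyset\ne B\subseteq S$, we have $B\in\mathcal B$ if and only if the number of vertices that are adjacent to every vertex in $\{v\}\cup B$ and non-adjacent to every vertex in $S\setminus B$ is odd.
   Context: $G(n,1/2)$ is the uniform distribution over simple graphs on vertex set $[n]$ (each pair an edge independently with probability $1/2$). A function is negligible ($\mathrm{negl}(n)$) if eventually below $1/p(n)$ in absolute value for every polynomial $p$. *)

From mathcomp Require Import all_boot all_order all_algebra.
Set Implicit Arguments. Unset Strict Implicit. Unset Printing Implicit Defensive.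
Import Order.TTheory GRing.Theory Num.Theory.

Definition simple_graph (n : nat) (E : {set {set 'I_n}}) : bool :=
  [forall e in E, #|e| == 2].

(* Adjacency: u ~ v iff {u,v} is an edge (never holds for u = v). *)
Definition adj (n : nat) (E : {set {set 'I_n}}) (u v : 'I_n) : bool :=
  [set u; v] \in E.

Definition pattern_set (n : nat) (E : {set {set 'I_n}}) (S B : {set 'I_n}) (v : 'I_n)
  : {set 'I_n} :=
  [set w | [forall u in v |: B, adj E w u] && [forall u in S :\: B, ~~ adj E w u]].

Definition good_event (k n : nat) (E : {set {set 'I_n}}) : bool :=
  [forall S : {set 'I_n}, (#|S| == k) ==>
    [forall F : {set {set 'I_n}},
      (F \subset [set B : {set 'I_n} | (B != set0) && (B \subset S)]) ==>
      [exists v : 'I_n, (v \notin S) &&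
        [forall B : {set 'I_n}, ((B != set0) && (B \subset S)) ==>
           ((B \in F) == odd #|pattern_set E S B v|)]]]].

(* Probability, under G(n,1/2) (uniform over simple graphs on [n]), that the event fails. *)
Definition fail_prob (k n : nat) : rat :=
  (#|[set E : {set {set 'I_n}} | simple_graph E && ~~ good_event k E]|%:R
   / #|[set E : {set {set 'I_n}} | simple_graph E]|%:R)%R.

Definition negligible (f : nat -> rat) : Prop :=
  forall c : nat, exists N : nat, forall n : nat, (N <= n)%N ->
    (`|f n| < ((n%:R : rat) ^+ c)^-1)%R.

From mathcomp Require Import all_boot all_order all_algebra.
From mathcomp Require Import zify ring.
Set Implicit Arguments. Unset Strict Implicit. Unset Printing Implicit Defensive.

(* Fix S with |S| = k.  For a nonempty B \subset S, the B-cell of S is the set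
   of vertices whose neighbourhood inside S is exactly B; the pattern set of
   (S, B, v) is then the part of the B-cell adjacent to v.  Split the vertices
   outside S into a low half (indices < n/2), where the witness v is sought,
   and a high half, which supplies cell vertices.  A graph fails for S only if
   (a) some B-cell misses the high half, or
   (b) all cells meet the high half, but for some family F every vertex of
       the low half has a wrong parity for some B.
   Both events are bounded by a switching argument (averaging_bound): a family
   of edge-toggling involutions of the simple graphs such that each graph is
   moved into the bad event by only a fraction (1 - 2^-m)^N of them.  For (a)
   toggle edges between the high half and S (m = k, N >= n/2 - k); for (b)
   toggle, for v in the low half and each B, the edge from v to a canonical
   vertex of the B-cell, which flips the parity of exactly that pattern set
   (m = 2^k - 1, N >= n/2 - k).  A union bound over S, F and B gives
   fail_prob <= n^k 2M (1 - 1/M)^(n/2 - k) with M = 2^(2^k), and since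
   (1 - 1/M)^M <= 1/2 this decays faster than any inverse polynomial. *)

Lemma card_bigcup_le (I T : finType) (P : pred I) (A : I -> {set T}) :
  #|\bigcup_(i | P i) A i| <= \sum_(i | P i) #|A i|.
Proof.
elim/big_rec2: _ => [|i X s _ IH]; first by rewrite cards0.
by apply: leq_trans (leq_card_setU _ _) _; rewrite leq_add2l.
Qed.

(* Each g maps A onto A, so it pulls Bad back to a
   set of the same size; counting pairs (g, x) with act g x \in Bad then shows
   that Bad itself is at most a fraction c/m of A. *)
Lemma averaging_bound (T G : finType) (A Bad : {set T}) (act : G -> T -> T) (c m : nat) :
  0 < #|G| -> Bad \subset A ->
  (forall g x, x \in A -> act g x \in A) ->
  (forall g, {in A &, injective (act g)}) ->
  (forall x, x \in A -> #|[set g | act g x \in Bad]| * m <= c * #|G|) ->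
  #|Bad| * m <= c * #|A|.
Proof.
move=> G_gt0 sBadA actA act_inj few_bad.
have pullback g : #|Bad| <= #|[set x in A | act g x \in Bad]|.
  have onto : act g @: A = A.
    apply/eqP; rewrite eqEcard card_in_imset // leqnn andbT.
    by apply/subsetP=> y /imsetP[x xA ->]; apply: actA.
  apply: leq_trans (leq_imset_card (act g) _).
  apply: subset_leq_card; apply/subsetP=> y yBad.
  have := subsetP sBadA y yBad; rewrite -{1}onto => /imsetP[x xA exy].
  by apply/imsetP; exists x => //; rewrite inE xA -exy yBad.
have count_pairs : \sum_(g : G) #|[set x in A | act g x \in Bad]| =
                   \sum_(x in A) #|[set g | act g x \in Bad]|.
  rewrite (eq_bigr (fun g => \sum_(x in A) (act g x \in Bad : nat))); last first.
    by move=> g _; rewrite -sum1dep_card big_mkcondr.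
  rewrite exchange_big /=; apply: eq_bigr => x _.
  by rewrite -sum1dep_card [RHS]big_mkcond.
have lower : #|Bad| * #|G| <= \sum_(g : G) #|[set x in A | act g x \in Bad]|.
  rewrite -[#|G|]sum1_card big_distrr /=.
  by apply: leq_sum => g _; rewrite muln1 pullback.
have upper : (\sum_(x in A) #|[set g | act g x \in Bad]|) * m <= c * #|G| * #|A|.
  rewrite big_distrl -[#|A|]sum1_card big_distrr /=.
  by apply: leq_sum => x xA; rewrite muln1; apply: few_bad.
rewrite -(leq_pmul2r G_gt0) mulnAC [c * _ * _]mulnAC.
apply: leq_trans (leq_mul lower (leqnn m)) _.
rewrite count_pairs; exact: upper.
Qed.

Lemma card_family_prod (I rT : finType) (F : I -> pred rT) :
  #|(family F : simpl_pred {ffun I -> rT})| = \prod_(i : I) #|F i|.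
Proof. by rewrite (card_family F) foldrE big_map big_enum. Qed.

Lemma prod_if_in (I : finType) (R : {set I}) (a b : nat) :
  \prod_(i : I) (if i \in R then a else b) = a ^ #|R| * b ^ #|~: R|.
Proof.
rewrite (bigID (mem R)) /=.
rewrite (eq_bigr (fun _ => a)); last by move=> i ->.
rewrite [X in _ * X](eq_bigr (fun _ => b)); last by move=> i /negbTE ->.
by rewrite !prod_nat_const; congr (_ ^ _ * _ ^ _); apply: eq_card => i; rewrite !inE.
Qed.

Lemma card_ffun_agree (J : finType) (C : {set J}) (t : J -> bool) :
  #|[set h : {ffun J -> bool} | [forall j in C, h j == t j]]| = 2 ^ #|~: C|.
Proof.
pose F j := if j \in C then pred1 (t j) else predT.
transitivity #|(family F : simpl_pred {ffun J -> bool})|.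
  apply: eq_card => h; rewrite inE; apply/forall_inP/familyP => H j.
    by rewrite /F; case: ifP => // jC; rewrite inE; apply: H.
  by move=> jC; have := H j; rewrite /F jC inE.
rewrite card_family_prod (eq_bigr (fun j => if j \in C then 1 else 2)).
  by rewrite prod_if_in exp1n mul1n.
move=> j _; rewrite /F; case: ifP => _; first by rewrite card1.
by rewrite -card_bool; apply: eq_card.
Qed.

Lemma card_ffun_disagree (J : finType) (C : {set J}) (t : J -> bool) :
  #|[set h : {ffun J -> bool} | [exists j in C, h j != t j]]| =
  (2 ^ #|C| - 1) * 2 ^ #|~: C|.
Proof.
set agree := [set h : {ffun J -> bool} | [forall j in C, h j == t j]].
have -> : [set h : {ffun J -> bool} | [exists j in C, h j != t j]] = ~: agree.
  by apply/setP => h; rewrite !inE negb_forall_in.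
have := cardsC agree; rewrite card_ffun_agree card_ffun card_bool -(cardsC C) expnD.
have := expn_gt0 2 #|C|; rewrite mulnBl mul1n; nia.
Qed.

Lemma card_ffun_rows_disagree (I J : finType) (R : {set I}) (C : {set J})
    (t : I -> J -> bool) :
  #|[set g : {ffun I -> {ffun J -> bool}} |
      [forall i in R, exists j in C, g i j != t i j]]| * 2 ^ (#|C| * #|R|)
  = (2 ^ #|C| - 1) ^ #|R| * #|{ffun I -> {ffun J -> bool}}|.
Proof.
pose F i := if i \in R then mem [set h : {ffun J -> bool} | [exists j in C, h j != t i j]]
            else mem (predT : pred {ffun J -> bool}).
have -> : #|[set g : {ffun I -> {ffun J -> bool}} |
             [forall i in R, exists j in C, g i j != t i j]]|
          = #|(family F : simpl_pred {ffun I -> {ffun J -> bool}})|.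
  apply: eq_card => g; rewrite inE; apply/forall_inP/familyP => H i.
    by rewrite /F; case: ifP => // iR; rewrite inE; apply: H.
  by move=> iR; have := H i; rewrite /F iR inE.
rewrite card_family_prod (eq_bigr (fun i =>
  if i \in R then (2 ^ #|C| - 1) * 2 ^ #|~: C| else 2 ^ #|J|)); last first.
  move=> i _; rewrite /F; case: ifP => _; first by rewrite card_ffun_disagree.
  by rewrite -card_bool -card_ffun; apply: eq_card.
rewrite prod_if_in !card_ffun card_bool -(cardsC R) -(cardsC C).
rewrite expnMn mulnC expnM !expnD !expnMn -!expnM -!mulnA; exact: mulnCA.
Qed.

Lemma odd_card_flip1 (T : finType) (A : {set T}) (r : T) :
  odd #|[set w | (w \in A) (+) (w == r)]| = ~~ odd #|A|.
Proof.
case rA: (r \in A).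
  have -> : [set w | (w \in A) (+) (w == r)] = A :\ r.
    by apply/setP => w; rewrite !inE; case: (w =P r) => [->|_]; rewrite ?rA ?addbT ?addbF.
  by rewrite (cardsD1 r A) rA /= negbK.
have -> : [set w | (w \in A) (+) (w == r)] = r |: A.
  by apply/setP => w; rewrite !inE; case: (w =P r) => [->|_]; rewrite ?rA ?addbT ?addbF.
by rewrite cardsU1 rA.
Qed.

Lemma set2_eq (T : finType) (a b c d : T) : [set a; b] = [set c; d] ->
  (a = c /\ b = d) \/ (a = d /\ b = c).
Proof.
move=> e.
have mem_cd x : x \in [set a; b] -> x = c \/ x = d by rewrite e => /set2P.
have mem_ab x : x \in [set c; d] -> x = a \/ x = b by rewrite -e => /set2P.
have [a_c|a_d] := mem_cd a (set21 a b); have [b_c|b_d] := mem_cd b (set22 a b).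
- by have [d_a|d_b] := mem_ab d (set22 c d); left; subst.
- by left.
- by right.
- by have [c_a|c_b] := mem_ab c (set21 c d); right; subst.
Qed.

Section Graphs.
Variable n : nat.
Implicit Types (E D : {set {set 'I_n}}) (S B : {set 'I_n}) (u v w : 'I_n).

Definition toggle E D : {set {set 'I_n}} := (E :\: D) :|: (D :\: E).

Lemma in_toggle E D X : (X \in toggle E D) = (X \in E) (+) (X \in D).
Proof. by rewrite !inE; case: (X \in E); case: (X \in D). Qed.

Lemma toggleK E D : toggle (toggle E D) D = E.
Proof. by apply/setP => X; rewrite !in_toggle; case: (X \in E); case: (X \in D). Qed.

Lemma toggle_inj D : injective (toggle^~ D).
Proof. by apply: (can_inj (g := toggle^~ D)) => E; apply: toggleK. Qed.

Lemma adj_toggle E D u v : adj (toggle E D) u v = adj E u v (+) ([set u; v] \in D).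
Proof. by rewrite /adj in_toggle. Qed.

Lemma simple_toggle E D : simple_graph E -> (forall X, X \in D -> #|X| == 2) ->
  simple_graph (toggle E D).
Proof.
move=> /forall_inP sE sD; apply/forall_inP => X; rewrite in_toggle.
by case XE: (X \in E) => /=; [move=> _; apply: sE | apply: sD].
Qed.

Definition in_cell E S B w := [forall u in S, adj E w u == (u \in B)].

Lemma pattern_setE E S B v : B \subset S ->
  pattern_set E S B v = [set w | adj E w v && in_cell E S B w].
Proof.
move=> sBS; apply/setP => w; rewrite !inE; apply/andP/andP.
  case=> /forall_inP adjB /forall_inP nadjSB.
  split; first by apply: adjB; rewrite !inE eqxx.
  apply/forall_inP => u uS; case uB: (u \in B).
    by apply/eqP; apply: adjB; rewrite !inE uB orbT.
  by apply/eqP/negbTE; apply: nadjSB; rewrite !inE uB.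
case=> adj_v /forall_inP cell; split; apply/forall_inP => u.
  rewrite !inE => /orP[/eqP -> //|uB].
  by have /eqP -> := cell u (subsetP sBS u uB).
by rewrite !inE => /andP[uB uS]; have /eqP -> := cell u uS; rewrite (negbTE uB).
Qed.

Lemma in_cell_toggle E D S B w : (forall u, u \in S -> [set w; u] \notin D) ->
  in_cell (toggle E D) S B w = in_cell E S B w.
Proof.
move=> avoid; apply: eq_forallb_in => u uS.
by rewrite adj_toggle (negbTE (avoid u uS)) addbF.
Qed.

Lemma in_cell_inj E S B B' w : B \subset S -> B' \subset S ->
  in_cell E S B w -> in_cell E S B' w -> B = B'.
Proof.
move=> sB sB' /forall_inP cellB /forall_inP cellB'; apply/setP => u.
case uS: (u \in S); last first.
  by rewrite (contraFF (subsetP sB u) uS) (contraFF (subsetP sB' u) uS).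
by have /eqP <- := cellB u uS; have /eqP <- := cellB' u uS.
Qed.

End Graphs.

Section Events.
Variable n : nat.
Implicit Types (E D : {set {set 'I_n}}) (S B : {set 'I_n}) (u v w : 'I_n).

Definition low_half S : {set 'I_n} := [set i : 'I_n | i < n./2] :\: S.
Definition high_half S : {set 'I_n} := [set i : 'I_n | n./2 <= i] :\: S.

Lemma low_notin_high S v : v \in low_half S -> v \notin high_half S.
Proof. by rewrite !inE negb_and => /andP[_ lt_v]; rewrite -ltnNge lt_v orbT. Qed.

Lemma low_notin S v : v \in low_half S -> v \notin S.
Proof. by rewrite !inE => /andP[]. Qed.

Lemma high_notin S w : w \in high_half S -> w \notin S.
Proof. by rewrite !inE => /andP[]. Qed.

Lemma card_below m : m <= n -> #|[set i : 'I_n | i < m]| = m.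
Proof.
move=> le_mn; have -> : [set i : 'I_n | i < m] = widen_ord le_mn @: [set: 'I_m].
  apply/setP => i; rewrite inE; apply/idP/imsetP => [lt_im|[j _ ->]]; last by rewrite /= ltn_ord.
  by exists (Ordinal lt_im) => //; apply: val_inj.
by rewrite card_imset ?cardsT ?card_ord // => i j /(congr1 val) /= /val_inj.
Qed.

Lemma card_low_half S : n./2 - #|S| <= #|low_half S|.
Proof.
rewrite /low_half cardsD card_below; last by rewrite -divn2 leq_div.
by rewrite leq_sub2l // subset_leq_card // subsetIr.
Qed.

Lemma card_high_half S : n./2 - #|S| <= #|high_half S|.
Proof.
have -> : high_half S = ~: [set i : 'I_n | i < n./2] :\: S.
  by apply/setP => i; rewrite !inE -leqNgt.
rewrite cardsD.
have := cardsC [set i : 'I_n | i < n./2].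
rewrite card_below ?card_ord; last by rewrite -divn2 leq_div.
have : #|~: [set i : 'I_n | i < n./2] :&: S| <= #|S| by rewrite subset_leq_card // subsetIr.
have : n./2 <= n - n./2 by have := odd_double_half n; rewrite -addnn; lia.
set c := #|~: _|; set d := #|_ :&: S|; set h := n./2; lia.
Qed.

Definition simple_graphs : {set {set {set 'I_n}}} := [set E | simple_graph E].

Lemma card_switches_gt0 (I J : finType) : 0 < #|{ffun I -> {ffun J -> bool}}|.
Proof. by rewrite card_ffun expn_gt0 card_ffun card_bool expn_gt0. Qed.

Definition uncovered_graphs S B : {set {set {set 'I_n}}} :=
  [set E | simple_graph E && [forall w in high_half S, ~~ in_cell E S B w]].

Definition cross_edges S (g : {ffun 'I_n -> {ffun 'I_n -> bool}}) : {set {set 'I_n}} :=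
  [set [set w; s] | w in high_half S, s in S & g w s].

Lemma cross_edges_2 S g X : X \in cross_edges S g -> #|X| == 2.
Proof.
case/imset2P => w s wW; rewrite inE => /andP[sS _] ->.
by rewrite cards2 (contraNneq _ (high_notin wW)) // => ->.
Qed.

Lemma in_cross_edges S g w s : w \in high_half S -> s \in S ->
  ([set w; s] \in cross_edges S g) = g w s.
Proof.
move=> wW sS; apply/imset2P/idP => [[w' s' w'W]|gws]; last first.
  by exists w s => //; rewrite inE sS.
rewrite inE => /andP[s'S g'] /set2_eq [[-> ->] //|[ws' _]].
by move: (high_notin wW); rewrite ws' s'S.
Qed.

(* Under a random switch the traces on S of the high-half vertices become
   independent and uniform, so every graph is moved into the event with
   probability at most (1 - 2^-|S|)^|high half|. *)
Lemma uncovered_bound S B :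
  #|uncovered_graphs S B| * 2 ^ (#|S| * #|high_half S|)
    <= (2 ^ #|S| - 1) ^ #|high_half S| * #|simple_graphs|.
Proof.
apply: (averaging_bound (act := fun g E => toggle E (cross_edges S g)))
  (card_switches_gt0 _ _) _ _ _ _.
- by apply/subsetP => E; rewrite !inE => /andP[].
- move=> g E; rewrite !inE => sE.
  by apply: simple_toggle => // X; apply: cross_edges_2.
- by move=> g; apply: in2W; apply: toggle_inj.
move=> E _.
rewrite -(card_ffun_rows_disagree (high_half S) S (fun w s => adj E w s (+) (s \in B))).
rewrite leq_mul2r; apply/orP; right.
apply: subset_leq_card; apply/subsetP => g; rewrite !inE => /andP[_ /forall_inP no_cell].
apply/forall_inP => w wW; have := no_cell w wW; rewrite negb_forall_in.
case/exists_inP => s sS; rewrite adj_toggle in_cross_edges // => neq.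
by apply/exists_inP; exists s => //; move: neq; case: adj; case: (g w s); case: (s \in B).
Qed.


Definition nonempty_subsets S : {set {set 'I_n}} :=
  [set B : {set 'I_n} | (B != set0) && (B \subset S)].

Definition cells_covered S E :=
  [forall B in nonempty_subsets S, exists w in high_half S, in_cell E S B w].

Definition parity_fail_graphs S (F : {set {set 'I_n}}) : {set {set {set 'I_n}}} :=
  [set E | [&& simple_graph E, cells_covered S E &
     [forall v in low_half S, exists B in nonempty_subsets S,
        (B \in F) != odd #|pattern_set E S B v|]]].

Definition covered_graphs S : {set {set {set 'I_n}}} :=
  [set E | simple_graph E && cells_covered S E].

Definition cell_rep E S B w :=
  [pick w' in [set w' in high_half S | in_cell E S B w']] == Some w.

Definition rep_edges S E (g : {ffun 'I_n -> {ffun {set 'I_n} -> bool}}) : {set {set 'I_n}} :=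
  [set [set v; w] | v in low_half S, w in high_half S &
     [exists B in nonempty_subsets S, g v B && cell_rep E S B w]].

Definition rep_switch S g E := toggle E (rep_edges S E g).

Lemma cell_repP E S B w : cell_rep E S B w -> (w \in high_half S) && in_cell E S B w.
Proof. by rewrite /cell_rep; case: pickP => [w' + /eqP [<-]|//]; rewrite inE. Qed.

Lemma cell_rep_exists E S B : cells_covered S E -> B \in nonempty_subsets S ->
  exists r, cell_rep E S B r.
Proof.
move=> /forall_inP /(_ B) covered /covered /exists_inP [w wW cell_w].
rewrite /cell_rep; case: pickP => [r _|none]; first by exists r.
by move: (none w); rewrite inE wW cell_w.
Qed.

Lemma rep_edges_2 S E g X : X \in rep_edges S E g -> #|X| == 2.
Proof.
case/imset2P => v w vU; rewrite inE => /andP[wW _] ->.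
by rewrite cards2 (contraNneq _ (low_notin_high vU)) // => ->.
Qed.

Lemma rep_edges_avoid S E g w u : u \in S -> [set w; u] \notin rep_edges S E g.
Proof.
move=> uS; apply/imset2P => -[v w' vU]; rewrite inE => /andP[w'W _].
by case/set2_eq => -[_ eu]; [move: (high_notin w'W) | move: (low_notin vU)]; rewrite -eu uS.
Qed.

Lemma in_rep_edges S E g v w : v \in low_half S ->
  ([set w; v] \in rep_edges S E g) =
  (w \in high_half S) && [exists B in nonempty_subsets S, g v B && cell_rep E S B w].
Proof.
move=> vU; apply/imset2P/idP => [[v' w' v'U]|/andP[wW rep]]; last first.
  by exists v w => //; [rewrite inE wW | rewrite setUC].
rewrite inE => /andP[w'W rep] /set2_eq [[_ e2]|[e1 e2]].
  by move: (low_notin_high vU); rewrite e2 w'W.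
by rewrite e1 e2 w'W.
Qed.

Lemma in_cell_switch S g E B w : in_cell (rep_switch S g E) S B w = in_cell E S B w.
Proof. by apply: in_cell_toggle => u uS; apply: rep_edges_avoid. Qed.

(* The switch does not move cells, hence neither their representatives nor
   the toggled edges: it is an involution. *)
Lemma rep_switchK S g E : rep_switch S g (rep_switch S g E) = E.
Proof.
suff same_edges : rep_edges S (rep_switch S g E) g = rep_edges S E g.
  by rewrite {1}/rep_switch same_edges toggleK.
have same_rep B w : cell_rep (rep_switch S g E) S B w = cell_rep E S B w.
  by rewrite /cell_rep; congr (_ == _); apply: eq_pick => w'; rewrite !inE in_cell_switch.
apply/setP => X; apply/imset2P/imset2P => -[v w vU wP ->]; exists v w => //;
  by move: wP; rewrite !inE (eq_existsb_in (fun B _ => congr1 (andb _) (same_rep B w))).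
Qed.

Lemma cells_covered_switch S g E : cells_covered S (rep_switch S g E) = cells_covered S E.
Proof.
by apply: eq_forallb_in => B _; apply: eq_existsb_in => w _; rewrite in_cell_switch.
Qed.

Lemma odd_pattern_switch S E g v B : cells_covered S E -> v \in low_half S ->
  B \in nonempty_subsets S ->
  odd #|pattern_set (rep_switch S g E) S B v| = odd #|pattern_set E S B v| (+) g v B.
Proof.
move=> covered vU BS; have sBS : B \subset S by move: BS; rewrite inE => /andP[].
have [r rep] := cell_rep_exists covered BS.
have /andP[rW cell_r] := cell_repP rep.
have toggled w : in_cell E S B w ->
    ([set w; v] \in rep_edges S E g) = g v B && (w == r).
  move=> cell_w; rewrite in_rep_edges //; apply/andP/andP => [[_]|[gvB /eqP ->]].
    case/exists_inP => B' B'S /andP[gvB' rep'].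
    have /andP[_ cell'] := cell_repP rep'.
    have sB'S : B' \subset S by move: B'S; rewrite inE => /andP[].
    have eB := in_cell_inj sBS sB'S cell_w cell'; subst B'.
    by move: rep' rep; rewrite /cell_rep gvB' => /eqP -> /eqP [->].
  by split=> //; apply/exists_inP; exists B => //; rewrite gvB rep.
rewrite !pattern_setE // /rep_switch.
under eq_finset => w do rewrite in_cell_switch adj_toggle.
case gvB: (g v B); last first.
  rewrite addbF; congr (odd _); apply: eq_card => w; rewrite !inE.
  by case cell_w: (in_cell E S B w); rewrite ?andbF // toggled // gvB addbF.
rewrite addbT -(odd_card_flip1 _ r); congr (odd _); apply: eq_card => w; rewrite !inE.
case cell_w: (in_cell E S B w); rewrite ?andbT ?andbF; first by rewrite toggled // gvB.
by case: eqP cell_w => // ->; rewrite cell_r.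
Qed.

(* On a covered graph a random switch makes the parities at the low-half
   vertices independent and uniform, so the graph is moved into the event
   with probability at most (1 - 2^-|nonempty_subsets S|)^|low half|. *)
Lemma parity_fail_bound S F :
  #|parity_fail_graphs S F| * 2 ^ (#|nonempty_subsets S| * #|low_half S|)
    <= (2 ^ #|nonempty_subsets S| - 1) ^ #|low_half S| * #|simple_graphs|.
Proof.
have covered_le : #|covered_graphs S| <= #|simple_graphs|.
  by apply/subset_leq_card/subsetP => E; rewrite !inE => /andP[].
apply: leq_trans _ (leq_mul (leqnn _) covered_le).
apply: (averaging_bound (act := rep_switch S)) (card_switches_gt0 _ _) _ _ _ _.
- by apply/subsetP => E; rewrite !inE => /and3P[-> ->].
- move=> g E; rewrite !inE => /andP[sE covered].
  rewrite cells_covered_switch covered andbT.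
  by apply: simple_toggle => // X; apply: rep_edges_2.
- by move=> g; apply: in2W; apply: (can_inj (g := rep_switch S g)); apply: rep_switchK.
move=> E; rewrite inE => /andP[_ covered].
rewrite -(card_ffun_rows_disagree (low_half S) (nonempty_subsets S)
          (fun v B => (B \in F) (+) odd #|pattern_set E S B v|)).
rewrite leq_mul2r; apply/orP; right.
apply: subset_leq_card; apply/subsetP => g; rewrite !inE => /and3P[_ _ /forall_inP wrong].
apply/forall_inP => v vU; have /exists_inP[B BS neq] := wrong v vU.
apply/exists_inP; exists B => //; move: neq; rewrite odd_pattern_switch //.
by case: (B \in F); case: (g v B); case: odd.
Qed.

End Events.

Lemma failure_cover n k :
  [set E : {set {set 'I_n}} | simple_graph E && ~~ good_event k E] \subset
  \bigcup_(S : {set 'I_n} | #|S| == k)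
     ((\bigcup_(F in powerset (nonempty_subsets S)) parity_fail_graphs S F)
      :|: \bigcup_(B in nonempty_subsets S) uncovered_graphs S B).
Proof.
apply/subsetP => E; rewrite inE => /andP[sE].
rewrite negb_forall => /existsP[S]; rewrite negb_imply => /andP[card_S].
rewrite negb_forall => /existsP[F]; rewrite negb_imply => /andP[sF no_v].
apply/bigcupP; exists S => //; apply/setUP.
case covered: (cells_covered S E); [left | right].
  apply/bigcupP; exists F; first by rewrite powersetE.
  rewrite inE sE covered /=; apply/forall_inP => v vU.
  move: no_v; rewrite negb_exists => /forallP /(_ v).
  rewrite (low_notin vU) /= negb_forall => /existsP[B]; rewrite negb_imply => /andP[BS neq].
  by apply/exists_inP; exists B; rewrite ?inE.
move/negbT: covered; rewrite negb_forall_in => /exists_inP[B BS no_w].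
by apply/bigcupP; exists B => //; rewrite inE sE -negb_exists_in.
Qed.

Lemma binom_le n k : 'C(n, k) <= n ^ k.
Proof.
apply: leq_trans (leq_pmulr _ (fact_gt0 k)) _.
have -> : n ^ k = \prod_(i < k) n by rewrite prod_nat_const card_ord.
by rewrite bin_ffact ffact_prod; apply: leq_prod => i _; apply: leq_subr.
Qed.

(* Bernoulli's inequality, in the form needed for (1 - 1/M)^M <= 1/2. *)
Lemma bernoulli_nat x m : x ^ m.+1 + m.+1 * x ^ m <= x.+1 ^ m.+1.
Proof.
elim: m => [|m IH]; first by rewrite !expn1 expn0 muln1 addn1.
rewrite (expnS x m.+1) (expnS x.+1 m.+1) (expnS x m).
move: IH; rewrite (expnS x m); set P := x ^ m; set Q := x.+1 ^ m.+1; nia.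
Qed.

Lemma half_bound M : 0 < M -> 2 * M.-1 ^ M <= M ^ M.
Proof. by case: M => // x _ /=; have := bernoulli_nat x x; rewrite (expnS x x); nia. Qed.

Lemma pow_le_exp2_div e a : 0 < a -> exists D, forall j, j ^ e <= D * 2 ^ (j %/ a).
Proof.
elim: e a => [|e IH] a a_gt0; first by exists 1 => j; rewrite expn0 mul1n expn_gt0.
have a2_gt0 : 0 < 2 * a by rewrite muln_gt0 a_gt0.
have [D HD] := IH (2 * a) a2_gt0.
exists (2 * a * D) => j.
have lin : j <= 2 * a * 2 ^ (j %/ (2 * a)).
  apply: leq_trans (ltnW (ltn_ceil j a2_gt0)) _.
  by rewrite mulnC leq_mul2l ltn_expl ?orbT.
have half_rate : 2 * (j %/ (2 * a)) <= j %/ a.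
  by rewrite [2 * a]mulnC divnMA mulnC leq_divM.
rewrite expnS; apply: leq_trans (leq_mul lin (HD j)) _.
rewrite mulnACA leq_mul2l -expnD addnn -mul2n leq_pexp2l ?orbT //.
Qed.

Lemma poly_lt_exp2 e C : exists Y, forall y, Y <= y -> y.+1 ^ e * C < 2 ^ y.
Proof.
have [D HD] := pow_le_exp2_div e (isT : 0 < 2).
exists (2 * (D * C) + 2) => y le_Yy.
set h := y.+1 %/ 2.
have := divn_eq y.+1 2; have := ltn_pmod y.+1 (isT : 0 < 2); rewrite -/h => ? ?.
have DC_lt : D * C < 2 ^ h.-1 by apply: leq_trans (ltn_expl _ (isT : 1 < 2)); lia.
have split_y : 2 ^ h.-1 * 2 ^ h <= 2 ^ y by rewrite -expnD leq_pexp2l //; lia.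
apply: leq_ltn_trans (leq_mul (HD y.+1) (leqnn C)) _.
by rewrite -/h mulnAC; apply: leq_trans split_y; rewrite ltn_pmul2r ?expn_gt0.
Qed.

Lemma poly_lt_exp2_rate e C k M : 0 < M ->
  exists N, forall n, N <= n -> n ^ e * C < 2 ^ ((n./2 - k) %/ M).
Proof.
move=> M_gt0; set A := 2 * M + 2 * k + 2.
have [Y HY] := poly_lt_exp2 e (A ^ e * C).
exists (2 * (Y * M + k) + 2) => n le_Nn.
set y := (n./2 - k) %/ M.
have := divn_eq n 2; have := ltn_pmod n (isT : 0 < 2); rewrite divn2 => ? ?.
have := ltn_ceil (n./2 - k) M_gt0; rewrite -/y => ?.
have le_Yy : Y <= y by rewrite /y leq_divRL //; lia.
have le_nA : n <= A * y.+1 by rewrite /A; nia.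
apply: leq_ltn_trans (HY y le_Yy).
have : n ^ e <= (A * y.+1) ^ e.
  by case: (posnP e) => [->|e_gt0]; rewrite ?expn0 ?leq_exp2r.
by rewrite mulnA [y.+1 ^ e * _]mulnC -expnMn leq_mul2r => ->; rewrite orbT.
Qed.

Import Order.TTheory GRing.Theory Num.Theory.
Local Open Scope ring_scope.

(* The rate 1 - 1/M at which a single vertex fails to meet all its
   constraints, when there are at most log2 M of them. *)
Definition miss_rate (M : nat) : rat := 1 - M%:R^-1.

Lemma miss_rate_ge0 M : 0 <= miss_rate M.
Proof.
rewrite /miss_rate subr_ge0; case: M => [|M]; first by rewrite invr0 ler01.
by rewrite invf_le1 ?ltr0Sn // ler1n.
Qed.

Lemma miss_rate_le1 M : miss_rate M <= 1.
Proof. by rewrite /miss_rate lerBlDr lerDl invr_ge0 ler0n. Qed.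

Lemma miss_rateS m : miss_rate m.+1 = m%:R / m.+1%:R.
Proof.
rewrite /miss_rate -addn1 natrD.
have : m%:R + 1 != 0 :> rat by rewrite natr1 pnatr_eq0.
by move=> ?; field.
Qed.

Lemma miss_rate_le M M' : (0 < M)%N -> (M <= M')%N -> miss_rate M <= miss_rate M'.
Proof.
move=> M_gt0 le_MM'; rewrite /miss_rate lerB // lef_pV2 ?ler_nat // qualifE /= ltr0n //.
exact: leq_trans le_MM'.
Qed.

Lemma miss_rate_pow_self M : (0 < M)%N -> miss_rate M ^+ M <= 2^-1.
Proof.
case: M => // m _; rewrite miss_rateS expr_div_n -!natrX.
rewrite ler_pdivrMr ?ltr0n ?expn_gt0 // ler_pdivlMl // -natrM ler_nat.
exact: half_bound.
Qed.

Lemma miss_rate_pow M x : (0 < M)%N -> miss_rate M ^+ x <= ((2 ^ (x %/ M))%N%:R)^-1.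
Proof.
move=> M_gt0.
apply: le_trans (ler_wiXn2l (miss_rate_ge0 M) (miss_rate_le1 M) (leq_divM x M)) _.
rewrite mulnC exprM natrX -exprVn.
apply: lerXn2r; rewrite ?qualifE /= ?exprn_ge0 ?miss_rate_ge0 ?invr_ge0 ?ler0n //.
exact: miss_rate_pow_self.
Qed.

Lemma switching_rate (a T K u x M : nat) : (2 ^ K <= M)%N -> (x <= u)%N ->
  (a * 2 ^ (K * u) <= (2 ^ K - 1) ^ u * T)%N -> a%:R <= T%:R * miss_rate M ^+ x.
Proof.
move=> le_KM le_xu switching.
have P_gt0 : (0 < 2 ^ K)%N by rewrite expn_gt0.
have rateK : (2 ^ K - 1)%:R / (2 ^ K)%:R = miss_rate (2 ^ K).
  by rewrite -(prednK P_gt0) miss_rateS prednK // subn1.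
have exact_rate : a%:R <= T%:R * miss_rate (2 ^ K) ^+ u.
  rewrite -rateK expr_div_n -!natrX mulrA ler_pdivlMr ?ltr0n ?expn_gt0 //.
  by rewrite -!natrM ler_nat -expnM [(T * _)%N]mulnC.
apply: (le_trans exact_rate); rewrite ler_wpM2l ?ler0n //.
have ge0 M' : miss_rate M' \is Num.nneg by rewrite qualifE /= miss_rate_ge0.
apply: le_trans (lerXn2r u (ge0 _) (ge0 _) (miss_rate_le P_gt0 le_KM)) _.
exact: ler_wiXn2l (miss_rate_ge0 M) (miss_rate_le1 M) _ _ le_xu.
Qed.

Section FailureBound.
Variables k n : nat.

(* Each vertex meets at most M = 2^(2^k) constraints, on >= n/2 - k vertices. *)
Let M := (2 ^ (2 ^ k))%N.
Let x := (n./2 - k)%N.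
Let T := #|simple_graphs n|.

Lemma card_nonempty_subsets (S : {set 'I_n}) :
  #|S| = k -> (#|nonempty_subsets S| <= 2 ^ k)%N.
Proof.
move=> <-; rewrite -card_powerset subset_leq_card //.
by apply/subsetP => B; rewrite !inE => /andP[_ ->].
Qed.

Lemma parity_fail_rate (S : {set 'I_n}) F :
  #|S| = k -> #|parity_fail_graphs S F|%:R <= T%:R * miss_rate M ^+ x.
Proof.
move=> card_S; apply: switching_rate (parity_fail_bound S F).
- by rewrite leq_exp2l // card_nonempty_subsets.
- by have := card_low_half S; rewrite card_S.
Qed.

Lemma uncovered_rate (S : {set 'I_n}) B :
  #|S| = k -> #|uncovered_graphs S B|%:R <= T%:R * miss_rate M ^+ x.
Proof.
move=> card_S; apply: switching_rate (uncovered_bound S B).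
- by rewrite card_S leq_exp2l // ltnW // ltn_expl.
- by have := card_high_half S; rewrite card_S.
Qed.

(* Union bound: over the <= n^k sets S, the <= 2^(2^k) families F and the
   <= 2^k sets B. *)
Lemma fail_prob_le : fail_prob k n <= (n ^ k * (2 * M))%:R * miss_rate M ^+ x.
Proof.
have T_gt0 : (0 < T)%N.
  by apply/card_gt0P; exists set0; rewrite inE; apply/forall_inP => e; rewrite inE.
have rate_ge0 : 0 <= T%:R * miss_rate M ^+ x by rewrite mulr_ge0 ?exprn_ge0 ?miss_rate_ge0.
have per_S (S : {set 'I_n}) : #|S| = k ->
    ((\sum_(F in powerset (nonempty_subsets S)) #|parity_fail_graphs S F|
      + \sum_(B in nonempty_subsets S) #|uncovered_graphs S B|)%N%:R
     <= (2 * M)%N%:R * (T%:R * miss_rate M ^+ x)).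
  move=> card_S; rewrite natrD !natr_sum.
  apply: le_trans (lerD (ler_sum _ (fun F _ => parity_fail_rate F card_S))
                        (ler_sum _ (fun B _ => uncovered_rate B card_S))) _.
  rewrite !sumr_const -mulrnDr -[X in X <= _]mulr_natl ler_wpM2r // ler_nat card_powerset.
  have le_2k := card_nonempty_subsets card_S.
  have le_kM : (2 ^ k <= M)%N by rewrite ltnW // ltn_expl.
  by rewrite mul2n -addnn leq_add ?leq_exp2l // (leq_trans le_2k).
have union_bound :
    #|[set E : {set {set 'I_n}} | simple_graph E && ~~ good_event k E]|%:R
    <= \sum_(S : {set 'I_n} | #|S| == k) ((2 * M)%N%:R * (T%:R * miss_rate M ^+ x)).
  have := leq_trans (subset_leq_card (failure_cover n k)) (card_bigcup_le _ _).
  rewrite -(ler_nat rat) => /le_trans; apply; rewrite natr_sum.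
  apply: ler_sum => S /eqP card_S; apply: le_trans (per_S S card_S).
  by rewrite ler_nat (leq_trans (leq_card_setU _ _)) // leq_add // card_bigcup_le.
rewrite /fail_prob ler_pdivrMr ?ltr0n //; apply: le_trans union_bound _.
rewrite sumr_const (eq_card (B := [set S : {set 'I_n} | #|S| == k])); last by move=> S; rewrite inE.
change #|[set E : {set {set 'I_n}} | simple_graph E]| with T.
rewrite card_draws card_ord -(mulr_natl _ 'C(n, k)) mulrA -natrM [leRHS]mulrAC -mulrA ler_wpM2r //.
by rewrite ler_nat leq_mul2r binom_le orbT.
Qed.

End FailureBound.

Theorem mainTheorem13 (k : nat) (hk : (1 <= k)%N) :
  negligible (fun n => fail_prob k n).
Proof.
move=> c; set M := (2 ^ (2 ^ k))%N.
have M_gt0 : (0 < M)%N by rewrite expn_gt0.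
have [N rate_N] := poly_lt_exp2_rate (k + c) (2 * M) k M_gt0.
exists (maxn N 1) => n; rewrite geq_max => /andP[le_Nn n_gt0].
have fail_ge0 : 0 <= fail_prob k n by rewrite /fail_prob divr_ge0 ?ler0n.
rewrite ger0_norm //; apply: le_lt_trans (fail_prob_le k n) _.
apply: le_lt_trans (ler_wpM2l (ler0n _ _) (miss_rate_pow _ M_gt0)) _.
rewrite -natrX ltr_pdivrMr ?ltr0n ?expn_gt0 // ltr_pdivlMl ?ltr0n ?expn_gt0 ?n_gt0 //.
by rewrite -natrM ltr_nat mulnA -expnD addnC rate_N.
Qed.
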